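(* For all positive rationals $p<q<1$, $p\text{-}\mathsf{WWKL}\nleq_{\mathrm{W}} q\text{-}\mathsf{WWKL}$.
   Context: For a positive rational $q<1$, $q\text{-}\mathsf{WWKL}$ is the problem whose instances are subtrees $T$ of $2^{<\omega}$ with $|\{\sigma\in 2^n:\sigma\in T\}|/2^n\geq q$ for all $n$, and whose solutions are the infinite paths through $T$. $\mathsf{P}\leq_{\mathrm{W}}\mathsf{Q}$ means there are Turing functionals $\Phi,\Psi$ such that for every instance $A$ of $\mathsf{P}$, $\Phi(A)$ is an instance of $\mathsf{Q}$, and for every solution $T$ to $\Phi(A)$, $\Psi(A\oplus T)$ is a solution to $A$. *)

From HB Require Import structures.
From mathcomp Require Import all_boot all_order all_algebra.
Set Implicit Arguments. Unset Strict Implicit. Unset Printing Implicit Defensive.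
Import Order.TTheory GRing.Theory Num.Theory.

Inductive pcode : Type :=
| PZero
| PSucc
| PProj (i : nat)
| POracle
| PComp (f : pcode) (gs : seq pcode)
| PPrec (f g : pcode)
| PMin (f : pcode).

Inductive peval (X : nat -> nat) : pcode -> seq nat -> nat -> Prop :=
| ev_zero args : peval X PZero args 0
| ev_succ args : peval X PSucc args (head 0 args).+1
| ev_proj i args : peval X (PProj i) args (nth 0 args i)
| ev_oracle args : peval X POracle args (X (head 0 args))
| ev_comp f gs args ys y :
    pevals X gs args ys -> peval X f ys y -> peval X (PComp f gs) args y
| ev_prec0 f g args y :
    peval X f args y -> peval X (PPrec f g) (0 :: args) y
| ev_precS f g n args y z :
    peval X (PPrec f g) (n :: args) y -> peval X g (n :: y :: args) z ->
    peval X (PPrec f g) (n.+1 :: args) z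
| ev_min f args n :
    peval X f (n :: args) 0 ->
    (forall m, m < n -> exists k, peval X f (m :: args) k.+1) ->
    peval X (PMin f) args n
with pevals (X : nat -> nat) : seq pcode -> seq nat -> seq nat -> Prop :=
| evs_nil args : pevals X [::] args [::]
| evs_cons g gs args y ys :
    peval X g args y -> pevals X gs args ys -> pevals X (g :: gs) args (y :: ys).

(* Sets of naturals / elements of 2^omega are functions nat -> bool. *)
Definition oracle (A : nat -> bool) : nat -> nat := fun n => nat_of_bool (A n).

Definition join (A B : nat -> bool) : nat -> nat :=
  fun n => if odd n then nat_of_bool (B n./2) else nat_of_bool (A n./2).

Definition computes (Phi : pcode) (X : nat -> nat) (S : nat -> bool) : Prop :=
  forall n, peval X Phi [:: n] (nat_of_bool (S n)).

(* bijective coding of finite binary strings (first bit = head) by naturals *)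
Fixpoint scode (s : seq bool) : nat :=
  match s with
  | [::] => 0
  | b :: s' => ((scode s').*2 + nat_of_bool b).+1
  end.

Definition is_tree (T : nat -> bool) : Prop :=
  forall s t : seq bool, T (scode (s ++ t)) -> T (scode s).

Fixpoint strings (n : nat) : seq (seq bool) :=
  if n is n'.+1 then [seq b :: s | b <- [:: false; true], s <- strings n']
  else [:: [::]].

Definition level_count (T : nat -> bool) (n : nat) : nat :=
  count (fun s => T (scode s)) (strings n).

Definition wwkl_inst (q : rat) (T : nat -> bool) : Prop :=
  is_tree T /\
  forall n : nat, (q <= (level_count T n)%:R / ((2 ^ n)%N)%:R)%R.

Definition wwkl_sol (T : nat -> bool) (X : nat -> bool) : Prop :=
  forall n : nat, T (scode (mkseq X n)).

Definition weihrauch_le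
  (IP : (nat -> bool) -> Prop) (SP : (nat -> bool) -> (nat -> bool) -> Prop)
  (IQ : (nat -> bool) -> Prop) (SQ : (nat -> bool) -> (nat -> bool) -> Prop) : Prop :=
  exists Phi Psi : pcode,
    forall A, IP A ->
      exists B, computes Phi (oracle A) B /\ IQ B /\
        forall T, SQ B T ->
          exists X, computes Psi (join A T) X /\ SP A X.

(* Suppose the Turing functionals Phi and Psi witness such a reduction, and fix L and K
   with p·2^L < K < q·2^L.
   1. The full tree is a p-instance; let B0 = Phi(full tree).  By König's lemma and the
      use principle there is a level m such that, for every B0-extendible string s of
      length m, Psi already determines from the oracle full ⊕ s the first L bits v(s)
      of the solution it produces.
   2. An averaging argument gives a set S of K strings of length L that are values of v
      on at most K·2^m / 2^L < q·2^m strings of length m.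
   3. The tree A that is full up to a large height h and above h keeps only strings whose
      first L bits lie in S has measure K/2^L > p, so it is a p-instance.  As A agrees with
      the full tree below h, B = Phi(A) agrees with B0 on all codes of strings of length
      at most m + N, where N witnesses the B0-extendibility of the level-m nodes; hence
      every B-extendible s of length m is B0-extendible.  A path of B through such an s is
      sent by Psi to a path of A starting with v(s), so v(s) ∈ S.
   4. Since B has measure at least q, at least q·2^m strings of length m are
      B-extendible: a contradiction. *)

From HB Require Import structures.
From mathcomp Require Import all_boot all_order all_algebra.
From mathcomp Require Import zify lra.
From Stdlib Require Import ClassicalEpsilon.
Import Order.TTheory GRing.Theory Num.Theory.
Set Implicit Arguments. Unset Strict Implicit.

(* Unlike the scheme Rocq would
   generate, it also gives induction hypotheses for the derivations showing that the
   search of [PMin f] does not stop before its output. *)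
Section PevalInduction.
Variable X : nat -> nat.
Variable P : pcode -> seq nat -> nat -> Prop.
Variable Q : seq pcode -> seq nat -> seq nat -> Prop.
Hypothesis Hzero : forall args, P PZero args 0.
Hypothesis Hsucc : forall args, P PSucc args (head 0 args).+1.
Hypothesis Hproj : forall i args, P (PProj i) args (nth 0 args i).
Hypothesis Horacle : forall args, P POracle args (X (head 0 args)).
Hypothesis Hcomp : forall f gs args ys y, pevals X gs args ys -> Q gs args ys ->
  peval X f ys y -> P f ys y -> P (PComp f gs) args y.
Hypothesis Hprec0 : forall f g args y,
  peval X f args y -> P f args y -> P (PPrec f g) (0 :: args) y.
Hypothesis HprecS : forall f g n args y z,
  peval X (PPrec f g) (n :: args) y -> P (PPrec f g) (n :: args) y ->
  peval X g (n :: y :: args) z -> P g (n :: y :: args) z ->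
  P (PPrec f g) (n.+1 :: args) z.
Hypothesis Hmin : forall f args n,
  peval X f (n :: args) 0 -> P f (n :: args) 0 ->
  (forall m, m < n -> exists k, peval X f (m :: args) k.+1 /\ P f (m :: args) k.+1) ->
  P (PMin f) args n.
Hypothesis Hnil : forall args, Q [::] args [::].
Hypothesis Hcons : forall g gs args y ys, peval X g args y -> P g args y ->
  pevals X gs args ys -> Q gs args ys -> Q (g :: gs) args (y :: ys).

Fixpoint peval_mut_ind c a y (H : peval X c a y) {struct H} : P c a y :=
  match H in peval _ c a y return P c a y with
  | ev_zero args => Hzero args
  | ev_succ args => Hsucc args
  | ev_proj i args => Hproj i args
  | ev_oracle args => Horacle args
  | ev_comp f gs args ys y Hs Hf =>
      Hcomp Hs (pevals_mut_ind Hs) Hf (peval_mut_ind Hf)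
  | ev_prec0 f g args y Hf => Hprec0 g Hf (peval_mut_ind Hf)
  | ev_precS f g n args y z H1 H2 =>
      HprecS H1 (peval_mut_ind H1) H2 (peval_mut_ind H2)
  | ev_min f args n H0 Hlt => Hmin H0 (peval_mut_ind H0)
      (fun m Hm => match Hlt m Hm with
                   | ex_intro k Hk => ex_intro _ k (conj Hk (peval_mut_ind Hk)) end)
  end
with pevals_mut_ind gs a ys (H : pevals X gs a ys) {struct H} : Q gs a ys :=
  match H in pevals _ gs a ys return Q gs a ys with
  | evs_nil args => Hnil args
  | evs_cons g gs args y ys Hg Hgs =>
      Hcons Hg (peval_mut_ind Hg) Hgs (pevals_mut_ind Hgs)
  end.
End PevalInduction.

Lemma peval_det X c a v : peval X c a v -> forall v', peval X c a v' -> v = v'.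
Proof.
move=> H.
apply: (@peval_mut_ind X (fun c a y => forall y', peval X c a y' -> y = y')
  (fun gs a ys => forall ys', pevals X gs a ys' -> ys = ys')) H.
- by move=> args y' H; inversion H.
- by move=> args y' H; inversion H.
- by move=> i args y' H; inversion H.
- by move=> args y' H; inversion H.
- move=> f gs args ys y _ IHs _ IHf y' H; inversion H; subst.
  match goal with Hh : pevals _ _ _ _ |- _ => have E := IHs _ Hh end; subst.
  exact: IHf.
- by move=> f g args y _ IH y' H; inversion H; subst; apply: IH.
- move=> f g n args y z _ IH1 _ IH2 y' H; inversion H; subst.
  match goal with Hh : peval _ (PPrec _ _) _ _ |- _ => have E := IH1 _ Hh end; subst.
  exact: IH2.
- move=> f args n _ IH0 Hlt y' H; inversion H; subst.
  rename H1 into stop; rename H2 into below.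
  case: (ltngtP n y') => // [n_lt|y'_lt].
  + by have [k Hk] := below _ n_lt; have := IH0 _ Hk.
  + by have [k [_ IHk]] := Hlt _ y'_lt; have := IHk _ stop.
- by move=> args ys' H; inversion H.
- move=> g gs args y ys _ IHg _ IHs ys' H; inversion H; subst.
  match goal with Hg : peval _ _ _ _, Hs : pevals _ _ _ _ |- _ =>
    by rewrite (IHg _ Hg) (IHs _ Hs) end.
Qed.

Lemma nat_of_bool_inj : injective nat_of_bool.
Proof. by case; case. Qed.

Definition agree (X Y : nat -> nat) (N : nat) : Prop := forall k, k < N -> X k = Y k.

Lemma agree_mono X Y N M : M <= N -> agree X Y N -> agree X Y M.
Proof. by move=> le_MN XY k lt_kM; apply: XY; apply: leq_trans le_MN. Qed.

Lemma agree_trans X Y Z N : agree X Y N -> agree Y Z N -> agree X Z N.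
Proof. by move=> XY YZ k lt_kN; rewrite XY ?YZ. Qed.

Lemma common_bound (P : nat -> nat -> Prop) n :
  (forall i N M, N <= M -> P i N -> P i M) ->
  (forall i, i < n -> exists N, P i N) -> exists N, forall i, i < n -> P i N.
Proof.
move=> mono; elim: n => [|n IH] H; first by exists 0.
have [N1 H1] := IH (fun i lt => H i (ltnW lt)).
have [N2 H2] := H n (ltnSn n).
exists (maxn N1 N2) => i; rewrite ltnS leq_eqVlt => /predU1P[->|lt_in].
- by apply: mono H2; rewrite leq_maxr.
- by apply: mono (H1 i lt_in); rewrite leq_maxl.
Qed.

Lemma peval_use X c a v : peval X c a v ->
  exists N, forall Y, agree Y X N -> peval Y c a v.
Proof.
have mono2 (P1 P2 : (nat -> nat) -> Prop) N1 N2 :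
    (forall Y, agree Y X N1 -> P1 Y) -> (forall Y, agree Y X N2 -> P2 Y) ->
    forall Y, agree Y X (maxn N1 N2) -> P1 Y /\ P2 Y.
  move=> H1 H2 Y HY; split; [apply: H1 | apply: H2];
    by apply: agree_mono HY; rewrite ?leq_maxl ?leq_maxr.
move=> H.
apply: (@peval_mut_ind X (fun c a y => exists N, forall Y, agree Y X N -> peval Y c a y)
  (fun gs a ys => exists N, forall Y, agree Y X N -> pevals Y gs a ys)) H.
- by move=> args; exists 0 => Y _; constructor.
- by move=> args; exists 0 => Y _; constructor.
- by move=> i args; exists 0 => Y _; constructor.
- by move=> args; exists (head 0 args).+1 => Y HY; rewrite -HY //; constructor.
- move=> f gs args ys y _ [N1 H1] _ [N2 H2]; exists (maxn N1 N2) => Y HY.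
  by have [] := mono2 _ _ _ _ H1 H2 Y HY; apply: ev_comp.
- by move=> f g args y _ [N H]; exists N => Y HY; constructor; apply: H.
- move=> f g n args y z _ [N1 H1] _ [N2 H2]; exists (maxn N1 N2) => Y HY.
  by have [] := mono2 _ _ _ _ H1 H2 Y HY; apply: ev_precS.
- move=> f args n _ [N1 H1] Hlt.
  have [N2 H2] := @common_bound
    (fun m N => exists k, forall Y, agree Y X N -> peval Y f (m :: args) k.+1) n
    (fun i N M le '(ex_intro k Hk) =>
       ex_intro _ k (fun Y HY => Hk Y (agree_mono le HY)))
    (fun m lt => match Hlt m lt with
                 | ex_intro k (conj _ (ex_intro N HN)) => ex_intro _ N (ex_intro _ k HN) end).
  exists (maxn N1 N2) => Y HY; constructor.
  + by apply: H1; apply: agree_mono HY; rewrite leq_maxl.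
  + move=> m lt; have [k Hk] := H2 m lt; exists k; apply: Hk.
    by apply: agree_mono HY; rewrite leq_maxr.
- by move=> args; exists 0 => Y _; constructor.
- move=> g gs args y ys _ [N1 H1] _ [N2 H2]; exists (maxn N1 N2) => Y HY.
  by have [] := mono2 _ _ _ _ H1 H2 Y HY; constructor.
Qed.

Lemma computes_use (Phi : pcode) (X : nat -> nat) (B : nat -> bool) n :
  computes Phi X B ->
  exists U, forall k, k < n -> forall Y, agree Y X U -> peval Y Phi [:: k] (B k).
Proof.
move=> HB; apply: common_bound => [k U V le_UV HU Y HY|k _].
- by apply: HU; apply: agree_mono HY.
- exact: peval_use (HB k).
Qed.

Lemma computes_continuous (Phi : pcode) (X : nat -> nat) (B : nat -> bool) n :
  computes Phi X B -> exists U, forall Y B', computes Phi Y B' -> agree Y X U ->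
    forall k, k < n -> B' k = B k.
Proof.
move=> /(computes_use n) [U HU]; exists U => Y B' HB' HY k lt_kn.
by move: (HB' k) (HU k lt_kn Y HY) => /peval_det det /det /nat_of_bool_inj.
Qed.

Lemma join_agree (A A' T T' : nat -> bool) n :
  (forall k, k < n -> A k = A' k) -> (forall k, k < n -> T k = T' k) ->
  agree (join A T) (join A' T') (2 * n).
Proof.
move=> AA' TT' k lt_k; have lt_half : k./2 < n by rewrite ltn_half_double -mul2n.
by rewrite /join AA' // TT'.
Qed.

Lemma strings_S n :
  strings n.+1 = map (cons false) (strings n) ++ map (cons true) (strings n).
Proof. by rewrite /= cats0. Qed.

Lemma size_strings n : size (strings n) = 2 ^ n.
Proof.
by elim: n => // n IH; rewrite strings_S size_cat !size_map IH expnS mul2n addnn.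
Qed.

Lemma mem_strings n s : (s \in strings n) = (size s == n).
Proof.
elim: n s => [|n IH] [|b s] //; rewrite strings_S mem_cat.
- by apply/negbTE/negP => /orP[] /mapP[].
- have cons_inj (c : bool) : injective (cons c) by move=> ? ? [].
  have other c : (c :: s \in map (cons (~~ c)) (strings n)) = false.
    by apply/negbTE/negP => /mapP[? _ []]; case: c.
  case: b; rewrite (mem_map (cons_inj _)) IH /= eqSS.
  + by rewrite (other true).
  + by rewrite (other false) orbF.
Qed.

Lemma uniq_strings n : uniq (strings n).
Proof.
have cons_inj (c : bool) : injective (cons c) by move=> ? ? [].
elim: n => // n IH; rewrite strings_S cat_uniq !map_inj_uniq // IH /= andbT.
by apply/hasPn => _ /mapP[s _ ->]; apply/negP => /mapP[].
Qed.

Lemma count_take (P : pred (seq bool)) L n : L <= n ->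
  count (fun r => P (take L r)) (strings n) = count P (strings L) * 2 ^ (n - L).
Proof.
elim: L n P => [|L IH] n P le_Ln.
- rewrite subn0 /=; under eq_count do rewrite take0.
  by case: (P [::]); rewrite ?count_predT ?size_strings ?mul1n ?count_pred0.
- case: n le_Ln => // n le_Ln; rewrite !strings_S !count_cat !count_map.
  by rewrite subSS mulnDl -!IH.
Qed.

(* Each string of length m has 2^N extensions of length N, so there are at most 2^N
   times as many C-strings of length m + N as strings of length m with such a C-extension. *)
Lemma count_cat_le (C : pred (seq bool)) m N :
  count C (strings (m + N)) <=
  2 ^ N * count (fun s => has (fun t => C (s ++ t)) (strings N)) (strings m).
Proof.
elim: m C => [|m IH] C.
- rewrite add0n /= addn0; case: (boolP (has _ _)) => [_|none].
  + by rewrite muln1 -size_strings count_size.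
  + by rewrite muln0 leqn0 -leqn0 leqNgt -has_count.
- rewrite addSn !strings_S !count_cat !count_map mulnDr.
  exact: leq_add (IH (fun s => C (false :: s))) (IH (fun s => C (true :: s))).
Qed.

Lemma scode_inj : injective scode.
Proof.
elim=> [|b s IH] [|b' s'] //= [] E.
have eq_b : b = b'.
  by have := congr1 odd E; rewrite !oddD !odd_double; case: b b' {E} => [] [].
by subst b'; congr (_ :: _); apply: IH; move: E; rewrite -!addnn; lia.
Qed.

Lemma size_scode s : size s <= scode s.
Proof. by elim: s => //= b s IH; rewrite ltnS -addnn; lia. Qed.

Lemma scode_lt s : (scode s).+1 < 2 ^ (size s).+1.
Proof. by elim: s => //= b s IH; rewrite expnS; case: b => /=; rewrite -addnn; lia. Qed.

Lemma take_mkseq (f : nat -> bool) i n : i <= n -> take i (mkseq f n) = mkseq f i.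
Proof.
move=> le_in; apply: (@eq_from_nth _ false); rewrite size_takel ?size_mkseq // => j lt_ji.
by rewrite nth_take // !nth_mkseq //; lia.
Qed.

Lemma sub_in_count (T : eqType) (a b : pred T) (l : seq T) :
  {in l, forall x, a x -> b x} -> count a l <= count b l.
Proof.
move=> ab; rewrite -(eq_in_count (a1 := fun x => a x && b x)) ?sub_count //.
  by move=> x /andP[].
by move=> x /ab ax; case: (boolP (a x)) => //= /ax ->.
Qed.

Definition extendible (C : seq bool -> Prop) (s : seq bool) : Prop :=
  forall n, exists t, size t = n /\ C (s ++ t).

Definition prefix_closed (C : seq bool -> Prop) : Prop := forall s t, C (s ++ t) -> C s.

Lemma extendible_self C s : extendible C s -> C s.
Proof. by move=> /(_ 0) [t [/size0nil -> Cs]]; rewrite cats0 in Cs. Qed.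

Lemma extendible_prefix_closed C : prefix_closed C -> prefix_closed (extendible C).
Proof.
move=> closedC s t ext n; case: (leqP n (size t)) => [le_nt|lt_tn].
- exists (take n t); split; first by rewrite size_takel.
  apply: (closedC _ (drop n t)); rewrite -catA cat_take_drop; exact: extendible_self.
- have [u [size_u Cu]] := ext (n - size t); exists (t ++ u); split; last by rewrite catA.
  by rewrite size_cat size_u; lia.
Qed.

Section Konig.
Variable C : seq bool -> Prop.
Hypothesis closedC : prefix_closed C.

Definition extendible_child (s : seq bool) : seq bool :=
  if excluded_middle_informative (extendible C (rcons s false))
  then rcons s false else rcons s true.

Lemma extendible_child_ext s : extendible C s -> extendible C (extendible_child s).
Proof.
rewrite /extendible_child => ext; case: excluded_middle_informative => // not_left.
apply: NNPP => not_right.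
have [n1 H1] := not_all_ex_not _ _ not_left.
have [n2 H2] := not_all_ex_not _ _ not_right.
have [[|b u] [//= [size_u] Cbu]] := ext (maxn n1 n2).+1.
have Cb : C (rcons s b ++ u) by rewrite -cats1 -catA.
have cut n : n <= size u -> exists t, size t = n /\ C (rcons s b ++ t).
  move=> le_nu; exists (take n u); split; first by rewrite size_takel.
  by apply: (@closedC _ (drop n u)); rewrite -catA cat_take_drop.
by case: b Cb {Cbu} cut => _ cut; [apply: H2 | apply: H1]; apply: cut; lia.
Qed.

Lemma extendible_child_prefix s : take (size s) (extendible_child s) = s.
Proof.
rewrite /extendible_child.
by destruct excluded_middle_informative; rewrite /= -cats1 take_size_cat.
Qed.

Lemma size_extendible_child s : size (extendible_child s) = (size s).+1.
Proof.
by rewrite /extendible_child; destruct excluded_middle_informative; rewrite /= size_rcons.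
Qed.

Lemma konig s : extendible C s ->
  exists T : nat -> bool,
    (forall n, C (mkseq T n)) /\ (forall k, k < size s -> T k = nth false s k).
Proof.
move=> ext_s; pose path n := iter n extendible_child s.
have size_path n : size (path n) = size s + n.
  by elim: n => [|n IH]; rewrite ?addn0 //= size_extendible_child IH addnS.
have ext_path n : extendible C (path n).
  by elim: n => //= n IH; apply: extendible_child_ext.
have path_prefix i n : take (size (path n)) (path (i + n)) = path n.
  elim: i => [|i IH]; first by rewrite add0n take_size.
  have le_n : size (path n) <= size (path (i + n)) by rewrite !size_path; lia.
  by rewrite addSn /= -(take_takel _ le_n) extendible_child_prefix.
pose T k := nth false (path k.+1) k.
have T_path n k : k < size (path n) -> T k = nth false (path n) k.
  move=> lt_k; rewrite /T -[in RHS](path_prefix k.+1 n) -[in LHS](path_prefix n k.+1).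
  by rewrite !nth_take // ?size_path 1?addnC //; lia.
exists T; split.
- move=> n; apply: (@closedC _ (drop n (path n))).
  suff -> : mkseq T n = take n (path n) by rewrite cat_take_drop; exact: extendible_self.
  apply: (@eq_from_nth _ false); rewrite size_mkseq ?size_takel ?size_path ?leq_addl //.
  by move=> i lt_in; rewrite nth_mkseq // nth_take // (T_path n) // size_path; lia.
- by move=> k lt_k; rewrite (T_path 0).
Qed.
End Konig.

Definition in_tree (T : nat -> bool) : seq bool -> Prop := fun s => T (scode s).

Lemma in_tree_prefix_closed (T : nat -> bool) : is_tree T -> prefix_closed (in_tree T).
Proof. by move=> treeT s t; apply: treeT. Qed.

(* s has an extension of length N in T (a decidable approximation of extendibility). *)
Definition extends_to (T : nat -> bool) (s : seq bool) (N : nat) : bool :=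
  has (fun t => T (scode (s ++ t))) (strings N).

Lemma extends_toP (T : nat -> bool) s N :
  reflect (exists t, size t = N /\ T (scode (s ++ t))) (extends_to T s N).
Proof.
apply: (iffP hasP) => [[t]|[t [size_t Tt]]].
- by rewrite mem_strings => /eqP size_t Tt; exists t.
- by exists t; rewrite ?mem_strings ?size_t.
Qed.

Lemma extendible_extends_to (T : nat -> bool) s N :
  extendible (in_tree T) s -> extends_to T s N.
Proof. by move=> /(_ N) [t [size_t Tt]]; apply/extends_toP; exists t. Qed.

Lemma extends_to_mono (T : nat -> bool) s N M :
  is_tree T -> N <= M -> extends_to T s M -> extends_to T s N.
Proof.
move=> treeT le_NM /extends_toP [t [size_t Tt]]; apply/extends_toP.
exists (take N t); split; first by rewrite size_takel // size_t.
by apply: (treeT _ (drop N t)); rewrite -catA cat_take_drop.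
Qed.

Lemma extends_to_stable (T : nat -> bool) (l : seq (seq bool)) : is_tree T ->
  exists N, forall s, s \in l -> extends_to T s N -> extendible (in_tree T) s.
Proof.
move=> treeT; elim: l => [|s l [N IH]]; first by exists 0.
case: (classic (extendible (in_tree T) s)) => [ext_s|].
  by exists N => s'; rewrite inE => /predU1P[->|/IH].
move=> /not_all_ex_not [n not_n]; exists (maxn N n) => s'.
rewrite inE => /predU1P[-> deep|in_l deep].
- by case: not_n; apply/extends_toP; apply: extends_to_mono deep; rewrite ?leq_maxr.
- by apply: IH => //; apply: extends_to_mono deep; rewrite ?leq_maxl.
Qed.

Lemma extends_to_agree (T T' : nat -> bool) s N :
  (forall k, k < 2 ^ (size s + N).+1 -> T k = T' k) ->
  extends_to T s N = extends_to T' s N.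
Proof.
move=> TT'; apply: eq_in_has => t; rewrite mem_strings => /eqP size_t.
by apply: TT'; have := ltnW (scode_lt (s ++ t)); rewrite size_cat size_t.
Qed.

Lemma exists_heaviest (T : eqType) (f : T -> nat) (U : seq T) : U != [::] ->
  exists2 x, x \in U & forall y, y \in U -> f y <= f x.
Proof.
elim: U => // a [|b U] IH _.
  by exists a => [|y]; rewrite ?mem_seq1 // => /eqP ->.
have [x xU xmax] := IH isT.
case: (leqP (f a) (f x)) => [le_ax|lt_xa].
- exists x; first by rewrite inE xU orbT.
  by move=> y; rewrite inE => /predU1P[->|/xmax].
- exists a; first exact: mem_head.
  by move=> y; rewrite inE => /predU1P[->//|/xmax le_yx]; apply: leq_trans le_yx (ltnW lt_xa).
Qed.

(* Averaging: some K elements of U carry at most a fraction K/|U| of the total weight.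
   Repeatedly discarding a heaviest element does not increase the average weight. *)
Lemma light_subset (T : eqType) (f : T -> nat) (U : seq T) K : uniq U -> K <= size U ->
  exists S, [/\ uniq S, {subset S <= U}, size S = K &
    (\sum_(x <- S) f x) * size U <= K * \sum_(x <- U) f x].
Proof.
move=> uU /subnK; move: (size U - K) => d; elim: d U uU => [|d IH] U uU size_U.
  by exists U; split => //; rewrite -size_U add0n mulnC.
have [|x xU xmax] := exists_heaviest f (U := U); first by move: size_U; case: (U).
have size_rem : size (rem x U) = d + K by rewrite size_rem // -size_U.
have [S [uS subS size_S light]] := IH _ (rem_uniq x uU) (esym size_rem).
exists S; split => // [y /subS /mem_rem //|].
have le_S : \sum_(y <- S) f y <= K * f x.
  rewrite -size_S -sum1_size big_distrl big_seq [X in _ <= X]big_seq.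
  by apply: leq_sum => y /subS /mem_rem /xmax; rewrite /= mul1n.
rewrite (big_rem x xU) -size_U /=; move: light; rewrite size_rem; nia.
Qed.

Lemma count_mem_fibres (T : eqType) (V : Type) (g : V -> T) (S : seq T) (D : seq V) :
  uniq S -> count (fun u => g u \in S) D = \sum_(x <- S) count (fun u => g u == x) D.
Proof.
elim: S => [|x S IH] /=; first by rewrite big_nil; elim: D.
case/andP => xS uS; rewrite big_cons -IH // {IH}; elim: D => //= u D ->.
rewrite inE; case: eqP => [->|_] /=; last by rewrite addnCA.
by rewrite (negbTE xS) add0n addnA.
Qed.

Lemma light_preimage (v : seq bool -> seq bool) L K m :
  (forall s, size (v s) = L) -> K <= 2 ^ L ->
  exists S, [/\ uniq S, {subset S <= strings L}, size S = K &
    count (fun s => v s \in S) (strings m) * 2 ^ L <= K * 2 ^ m].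
Proof.
move=> size_v le_K; rewrite -size_strings in le_K.
have [S [uS subS size_S light]] :=
  light_subset (fun x => count (fun s => v s == x) (strings m)) (uniq_strings L) le_K.
have total : \sum_(x <- strings L) count (fun s => v s == x) (strings m) = 2 ^ m.
  rewrite -count_mem_fibres ?uniq_strings // -(size_strings m) -count_predT.
  by apply: eq_count => s; rewrite mem_strings size_v eqxx.
by exists S; split => //; rewrite count_mem_fibres // -total -(size_strings L).
Qed.

Local Open Scope ring_scope.

Lemma extends_to_count_lb (q : rat) (C : nat -> bool) m N : wwkl_inst q C ->
  q * (2 ^ m)%:R <= (count (fun s => extends_to C s N) (strings m))%:R.
Proof.
move=> [_ measure_C]; have pos n : 0 < (2 ^ n)%:R :> rat by rewrite ltr0n expn_gt0.
have := measure_C (m + N)%N; rewrite ler_pdivlMr // => lb.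
have ub : (level_count C (m + N))%:R <=
          (2 ^ N * count (fun s => extends_to C s N) (strings m))%:R :> rat.
  by rewrite ler_nat; apply: (count_cat_le (fun r => C (scode r))).
by have := le_trans lb ub; rewrite expnD !natrM mulrA [X in _ <= X]mulrC ler_pM2r.
Qed.

Lemma dyadic_between (p q : rat) : 0 <= p -> p < q ->
  exists L K : nat, p * (2 ^ L)%:R < K%:R /\ K%:R < q * (2 ^ L)%:R.
Proof.
move=> p_ge0 lt_pq; have gap : 0 < q - p by rewrite subr_gt0.
pose L := Num.bound (q - p)^-1.
have big_L : 1 < (2 ^ L)%:R * (q - p).
  have le_L : L%:R <= (2 ^ L)%:R :> rat by rewrite ler_nat ltnW // ltn_expl.
  rewrite -ltr_pdivrMr // div1r; apply: lt_le_trans le_L.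
  by apply: archi_boundP; rewrite invr_ge0 ltW.
exists L, (Num.truncn (p * (2 ^ L)%:R)).+1; split; first exact: truncnS_gt.
have le_t : (Num.truncn (p * (2 ^ L)%:R))%:R <= p * (2 ^ L)%:R.
  by rewrite truncn_le mulr_ge0 ?ler0n.
rewrite -natr1; apply: le_lt_trans (lerD le_t (lexx 1)) _.
by rewrite addrC -ltrBrDr -mulrBl mulrC.
Qed.

Local Close Scope ring_scope.

Definition cut_tree (h L : nat) (S : seq (seq bool)) : nat -> bool := fun k =>
  if excluded_middle_informative
       (exists r, scode r = k /\ h < size r /\ take L r \notin S)
  then false else true.

Section CutTree.
Variables (h L : nat) (S : seq (seq bool)).

Lemma cut_tree_code r :
  cut_tree h L S (scode r) = ~~ ((h < size r) && (take L r \notin S)).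
Proof.
rewrite /cut_tree; destruct excluded_middle_informative as [[r' [eq_r [hr rS]]]|no] => /=.
  by move/scode_inj: eq_r => <-; rewrite hr rS.
by apply/esym/negP => /andP[hr rS]; apply: no; exists r.
Qed.

(* Codes are at least as large as lengths, so the cut tree contains all codes <= h. *)
Lemma cut_tree_small k : k <= h -> cut_tree h L S k = true.
Proof.
move=> le_kh; rewrite /cut_tree.
destruct excluded_middle_informative as [[r [eq_r [hr rS]]]|] => //=.
by have := size_scode r; rewrite eq_r; lia.
Qed.

Hypothesis le_Lh : L <= h.

Lemma cut_tree_is_tree : is_tree (cut_tree h L S).
Proof.
move=> s t; rewrite !cut_tree_code size_cat; apply: contra => /andP[hs sS].
by rewrite takel_cat ?sS ?andbT; lia.
Qed.

Hypotheses (uS : uniq S) (subS : {subset S <= strings L}).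

Lemma cut_tree_level n :
  level_count (cut_tree h L S) n = if n <= h then 2 ^ n else size S * 2 ^ (n - L).
Proof.
rewrite /level_count; case: leqP => le_nh.
- rewrite -size_strings -count_predT; apply: eq_in_count => r.
  by rewrite mem_strings cut_tree_code => /eqP ->; rewrite ltnNge le_nh.
- have countS : count (mem S) (strings L) = size S.
    rewrite -size_filter; apply/perm_size/uniq_perm; rewrite ?filter_uniq ?uniq_strings //.
    by move=> x; rewrite mem_filter; apply/andP/idP => [[]//|xS]; split => //; apply: subS.
  rewrite -countS -count_take; last by lia.
  apply: eq_in_count => r; rewrite mem_strings cut_tree_code => /eqP ->.
  by rewrite le_nh /= negbK.
Qed.

Lemma cut_tree_inst (p : rat) : (p <= 1)%R -> (p * (2 ^ L)%:R <= (size S)%:R)%R ->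
  wwkl_inst p (cut_tree h L S).
Proof.
move=> p_le1 pS; have pos n : (0 < (2 ^ n)%:R :> rat)%R by rewrite ltr0n expn_gt0.
split=> [|n]; first exact: cut_tree_is_tree.
rewrite cut_tree_level; case: leqP => [_|lt_hn]; first by rewrite divff // gt_eqF.
rewrite ler_pdivlMr // -(subnKC (_ : L <= n)) ?expnD ?natrM; last by lia.
by rewrite subnKC 1?mulrA ?ler_pM2r //; lia.
Qed.
End CutTree.

Definition full_tree : nat -> bool := fun _ => true.

Lemma full_tree_inst (p : rat) : (p <= 1)%R -> wwkl_inst p full_tree.
Proof.
move=> p_le1; split=> // n; rewrite /level_count count_predT size_strings divff //.
by rewrite pnatr_eq0 -lt0n expn_gt0.
Qed.

(* Psi decides the first L output bits from the oracle A ⊕ s, where s is a finite part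
   of the second oracle: every oracle agreeing with A ⊕ s wherever s is defined makes
   Psi output the bits of w below L. *)
Definition decides (Psi : pcode) (A : nat -> bool) (L : nat) (s w : seq bool) : Prop :=
  forall Y, agree Y (join A (nth false s)) (2 * size s) ->
    forall i, i < L -> peval Y Psi [:: i] (nth false w i).

Lemma decides_cat Psi A L s t w : decides Psi A L s w -> decides Psi A L (s ++ t) w.
Proof.
move=> dec Y HY; apply: dec; apply: agree_trans (agree_mono _ HY) _.
  by rewrite size_cat; lia.
by apply: join_agree => // k lt_k; rewrite nth_cat lt_k.
Qed.

Lemma decision_level (Psi : pcode) (A B : nat -> bool) L :
  is_tree B -> (forall T, wwkl_sol B T -> exists X, computes Psi (join A T) X) ->
  exists m, forall s, size s = m -> extendible (in_tree B) s ->
    exists w, size w = L /\ decides Psi A L s w.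
Proof.
move=> treeB HPsi; apply: NNPP => no_level.
pose bad s := extendible (in_tree B) s /\ ~ exists w, size w = L /\ decides Psi A L s w.
have bad_closed : prefix_closed bad.
  move=> s t [ext undec]; split.
    exact: extendible_prefix_closed (in_tree_prefix_closed treeB) _ _ ext.
  by move=> [w [size_w dec]]; apply: undec; exists w; split => //; apply: decides_cat.
have bad_ext : extendible bad [::].
  move=> n; apply: NNPP => no_bad; apply: no_level; exists n => s size_s ext.
  by apply: NNPP => undec; apply: no_bad; exists s.
have [T [badT _]] := konig bad_closed bad_ext.
have [X HX] := HPsi T (fun n => extendible_self (badT n).1).
have [U HU] := computes_use L HX.
case: (badT U) => _; apply; exists (mkseq X L); split => [|Y]; first exact: size_mkseq.
rewrite size_mkseq => HY i lt_iL; rewrite nth_mkseq //; apply: HU => //.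
apply: agree_mono (agree_trans HY (join_agree _ _)) => // [|k lt_k]; first by lia.
by rewrite nth_mkseq.
Qed.

Lemma cut_path_prefix (Psi : pcode) (B : nat -> bool) h L S s w :
  L <= h -> size s <= h -> size w = L -> is_tree B ->
  (forall T, wwkl_sol B T ->
     exists X, computes Psi (join (cut_tree h L S) T) X /\ wwkl_sol (cut_tree h L S) X) ->
  extendible (in_tree B) s -> decides Psi full_tree L s w -> w \in S.
Proof.
move=> le_Lh le_sh size_w treeB HPsi ext dec.
have [T [pathT Ts]] := konig (in_tree_prefix_closed treeB) ext.
have [X [HX solX]] := HPsi T pathT.
have agree_s : agree (join (cut_tree h L S) T) (join full_tree (nth false s)) (2 * size s).
  by apply: join_agree => k lt_k; [rewrite cut_tree_small //; lia | rewrite Ts].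
have Xw : mkseq X L = w.
  apply: (@eq_from_nth _ false); rewrite size_mkseq ?size_w // => i lt_iL.
  rewrite nth_mkseq //.
  by move: (HX i) (dec _ agree_s i lt_iL) => /peval_det det /det /nat_of_bool_inj.
have := solX h.+1; rewrite cut_tree_code size_mkseq ltnSn take_mkseq ?Xw ?negbK //.
exact: leqW.
Qed.

Local Open Scope ring_scope.

Section Reduction.
Variables (p q : rat) (Phi Psi : pcode).
Hypothesis p_le1 : p <= 1.
Hypothesis red : forall A, wwkl_inst p A ->
  exists B, computes Phi (oracle A) B /\ wwkl_inst q B /\
    forall T, wwkl_sol B T -> exists X, computes Psi (join A T) X /\ wwkl_sol A X.

Lemma full_tree_decisions L : exists B0 m (v : seq bool -> seq bool),
  [/\ computes Phi (oracle full_tree) B0, is_tree B0, forall s, size (v s) = L &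
      forall s, size s = m -> extendible (in_tree B0) s -> decides Psi full_tree L s (v s)].
Proof.
have [B0 [HB0 [[treeB0 _] HPsi]]] := red (full_tree_inst p_le1).
have [m decide] : exists m, forall s, size s = m -> extendible (in_tree B0) s ->
    exists w, size w = L /\ decides Psi full_tree L s w.
  by apply: decision_level treeB0 _ => T /HPsi [X [HX _]]; exists X.
pose decided s w := size w = L /\
  (size s = m -> extendible (in_tree B0) s -> decides Psi full_tree L s w).
have [v Hv] : exists v : seq bool -> seq bool, forall s, decided s (v s).
  apply: (@choice _ _ decided) => s.
  case: (classic (size s = m /\ extendible (in_tree B0) s)) => [[sm ext]|not_s].
    by have [w [size_w dec]] := decide s sm ext; exists w.
  by exists (nseq L false); split => [|sm ext]; [rewrite size_nseq | case: not_s].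
by exists B0, m, v; split => // s; case: (Hv s).
Qed.

Lemma cut_tree_image_bound L m (B0 : nat -> bool) (v : seq bool -> seq bool)
    (S : seq (seq bool)) :
  computes Phi (oracle full_tree) B0 -> is_tree B0 -> (forall s, size (v s) = L) ->
  (forall s, size s = m -> extendible (in_tree B0) s -> decides Psi full_tree L s (v s)) ->
  uniq S -> {subset S <= strings L} -> p * (2 ^ L)%:R <= (size S)%:R ->
  q * (2 ^ m)%:R <= (count (fun s => v s \in S) (strings m))%:R.
Proof.
move=> HB0 treeB0 size_v dec_v uS subS pS.
have [N stable0] := extends_to_stable (strings m) treeB0.
have [U HU] := computes_continuous (2 ^ (m + N).+1) HB0.
pose h := maxn (maxn L m) U.
have [le_Lh le_mh le_Uh] : [/\ (L <= h)%N, (m <= h)%N & (U <= h)%N] by split; lia.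
have [B [HB [instB HPsi]]] := red (cut_tree_inst le_Lh uS subS p_le1 pS).
have B_B0 k : (k < 2 ^ (m + N).+1)%N -> B k = B0 k.
  by apply: HU HB _ k => j lt_j; rewrite /oracle cut_tree_small //; lia.
have [N' stable] := extends_to_stable (strings m) instB.1.
apply: le_trans (extends_to_count_lb m N' instB) _; rewrite ler_nat.
apply: sub_in_count => s; rewrite mem_strings => /eqP size_s deep.
have ext : extendible (in_tree B) s by apply: stable; rewrite ?mem_strings ?size_s.
have ext0 : extendible (in_tree B0) s.
  apply: stable0; first by rewrite mem_strings size_s.
  by rewrite -(extends_to_agree (T := B)) ?extendible_extends_to // size_s.
apply: cut_path_prefix le_Lh _ (size_v s) instB.1 HPsi ext (dec_v s size_s ext0).
by rewrite size_s.
Qed.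
End Reduction.

Theorem proposition4p6 (p q : rat) :
  0 < p -> p < q -> q < 1 ->
  ~ weihrauch_le (wwkl_inst p) wwkl_sol (wwkl_inst q) wwkl_sol.
Proof.
move=> p_gt0 lt_pq q_lt1 [Phi [Psi red]].
have p_le1 : p <= 1 by apply/ltW/(lt_trans lt_pq).
have [L [K [pK Kq]]] := dyadic_between (ltW p_gt0) lt_pq.
have pos n : 0 < (2 ^ n)%:R :> rat by rewrite ltr0n expn_gt0.
have le_K : (K <= 2 ^ L)%N.
  rewrite -(ler_nat rat); apply/ltW/(lt_le_trans Kq).
  by rewrite ler_piMl ?ltW.
have [B0 [m [v [HB0 treeB0 size_v dec_v]]]] := full_tree_decisions p_le1 red L.
have [S [uS subS size_S light]] := light_preimage m size_v le_K.
have := cut_tree_image_bound p_le1 red HB0 treeB0 size_v dec_v uS subS.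
rewrite size_S => /(_ (ltW pK)); set c := count _ _ => qc.
(* q·2^m <= c and c·2^L <= K·2^m < q·2^L·2^m are incompatible. *)
have : (c * 2 ^ L)%:R < q * (2 ^ L)%:R * (2 ^ m)%:R.
  by apply: le_lt_trans (_ : (K * 2 ^ m)%:R < _); rewrite ?ler_nat // natrM ltr_pM2r.
by rewrite natrM mulrAC ltr_pM2r // ltNge qc.
Qed.
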